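(* Let $G$ be a $\lambda$-graph, $B$ a bisimulation on the nodes of $G$, and $Q$ a query over $G$ with $Q\subseteq B$. Then $Q^{\Downarrow}$ is a bisimulation.
   Context: A pre-$\lambda$-graph is a directed graph whose nodes are of four kinds: an application node $@(n_1,n_2)$ has exactly two children, its left child $n_1$ and its right child $n_2$; an abstraction node $\lambda(n)$ has exactly one child, its body $n$; a free variable node has no children and carries an atom $\mathrm{id}(n)$ from a fixed set of atoms, distinct free variable nodes carrying distinct atoms; a bound variable node $\mathrm{var}(l)$ has exactly one outgoing binding edge, to an abstraction node $l$ (its binder). A trace is a finite sequence of directions from $\{\swarrow,\downarrow,\searrow\}$; $\epsilon$ is the empty trace and $d\cdot\tau$ is the trace $\tau$ extended by one final step $d$. Paths $n\xrightarrow{\tau}m$ are defined inductively: $n\xrightarrow{\epsilon}n$; if $n\xrightarrow{\tau}\lambda(m)$ then $n\xrightarrow{\downarrow\cdot\tau}m$; if $n\xrightarrow{\tau}@(m_1,m_2)$ then $n\xrightarrow{\swarrow\cdot\tau}m_1$ and $n\xrightarrow{\searrow\cdot\tau}m_2$ (binding edges are never followed). The path $n\xrightarrow{\tau}$ crosses a node $m$ if either $n\xrightarrow{\tau}m$, or $\tau=d\cdot\tau'$ and $n\xrightarrow{\tau'}$ crosses $m$. A root is a node $r$ such that the only path ending in $r$ has the empty trace. A node $m$ dominates $n$ if every path from a root to $n$ crosses $m$. A $\lambda$-graph is a pre-$\lambda$-graph that has finitely many nodes, is acyclic ($n\xrightarrow{\tau}n$ holds only for $\tau=\epsilon$), and is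 dominated (every bound variable node $\mathrm{var}(l)$ is dominated by its binder $l$). Two nodes are homogeneous if both are application nodes, or both abstraction nodes, or both free variable nodes, or both bound variable nodes; a binary relation $R$ on nodes is homogeneous if it only relates homogeneous nodes. Rules: $(\swarrow)$: $@(n_1,n_2)\,R\,@(m_1,m_2)$ implies $n_1\,R\,m_1$; $(\searrow)$: $@(n_1,n_2)\,R\,@(m_1,m_2)$ implies $n_2\,R\,m_2$; $(\downarrow)$: $\lambda(n)\,R\,\lambda(m)$ implies $n\,R\,m$; $(\circlearrowright)$: $\mathrm{var}(n)\,R\,\mathrm{var}(m)$ implies $n\,R\,m$. $R$ is propagated if closed under $(\swarrow),(\downarrow),(\searrow)$. A bisimulation is a homogeneous propagated relation closed also under $(\circlearrowright)$. $R^{\Downarrow}$ (propagation) is the smallest propagated relation containing $R$. A query over $G$ is a binary relation on the roots of $G$. *)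

From Stdlib Require Import List.
Import ListNotations.
Set Implicit Arguments.

Inductive node (V A : Type) : Type :=
| App  : V -> V -> node V A
| Abs  : V -> node V A
| FVar : A -> node V A
| BVar : V -> node V A.          (* var(l), binding edge to l *)

Arguments App {V A}. Arguments Abs {V A}. Arguments FVar {V A}. Arguments BVar {V A}.

Inductive dir : Type := DL | DD | DR .

(* A trace; the head of the list is the LAST step: (d :: tau) is d . tau. *)
Definition trace := list dir.

Section Graph.
Variables (V A : Type) (lab : V -> node V A).

Definition pre_lambda_graph : Prop :=
  (forall v w a, lab v = FVar a -> lab w = FVar a -> v = w) /\
  (forall v l, lab v = BVar l -> exists b, lab l = Abs b).

Inductive Path (n : V) : trace -> V -> Prop :=
| Path_nil : Path n [] n
| Path_abs : forall tau l m, Path n tau l -> lab l = Abs m -> Path n (DD :: tau) m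
| Path_left : forall tau l m1 m2, Path n tau l -> lab l = App m1 m2 -> Path n (DL :: tau) m1
| Path_right : forall tau l m1 m2, Path n tau l -> lab l = App m1 m2 -> Path n (DR :: tau) m2.

Fixpoint crosses (n : V) (tau : trace) (m : V) : Prop :=
  Path n tau m \/ match tau with [] => False | _ :: tau' => crosses n tau' m end.

Definition is_root (r : V) : Prop := forall n tau, Path n tau r -> tau = [].

Definition dominates (m n : V) : Prop :=
  forall r tau, is_root r -> Path r tau n -> crosses r tau m.

Definition finite_nodes : Prop := exists l : list V, forall v, In v l.

Definition acyclic : Prop := forall n tau, Path n tau n -> tau = [].

Definition dominated : Prop := forall v l, lab v = BVar l -> dominates l v.

Definition lambda_graph : Prop :=
  pre_lambda_graph /\ finite_nodes /\ acyclic /\ dominated.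

Definition homogeneous_nodes (n m : V) : Prop :=
  match lab n, lab m with
  | App _ _, App _ _ | Abs _, Abs _ | FVar _, FVar _ | BVar _, BVar _ => True
  | _, _ => False
  end.

Definition homogeneous (R : V -> V -> Prop) : Prop :=
  forall n m, R n m -> homogeneous_nodes n m.

Definition propagated (R : V -> V -> Prop) : Prop :=
  (forall n m n1 n2 m1 m2, R n m -> lab n = App n1 n2 -> lab m = App m1 m2 -> R n1 m1) /\
  (forall n m n1 n2 m1 m2, R n m -> lab n = App n1 n2 -> lab m = App m1 m2 -> R n2 m2) /\
  (forall n m n' m', R n m -> lab n = Abs n' -> lab m = Abs m' -> R n' m').

Definition closed_binders (R : V -> V -> Prop) : Prop :=
  forall n m l l', R n m -> lab n = BVar l -> lab m = BVar l' -> R l l'.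

Definition bisimulation (R : V -> V -> Prop) : Prop :=
  homogeneous R /\ propagated R /\ closed_binders R.

Inductive propagation (R : V -> V -> Prop) : V -> V -> Prop :=
| prop_base : forall n m, R n m -> propagation R n m
| prop_left : forall n m n1 n2 m1 m2, propagation R n m ->
    lab n = App n1 n2 -> lab m = App m1 m2 -> propagation R n1 m1
| prop_right : forall n m n1 n2 m1 m2, propagation R n m ->
    lab n = App n1 n2 -> lab m = App m1 m2 -> propagation R n2 m2
| prop_abs : forall n m n' m', propagation R n m ->
    lab n = Abs n' -> lab m = Abs m' -> propagation R n' m'.

Definition query (Q : V -> V -> Prop) : Prop :=
  forall n m, Q n m -> is_root n /\ is_root m.

End Graph.

From Stdlib Require Import List Lia.
Import ListNotations.
Set Implicit Arguments.

(* A pair (n, m) of the propagation Q^Downarrow is reached from a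
   query pair of roots (r, s) along one common trace t.  Since Q is contained
   in the bisimulation B and B is propagated, Q^Downarrow is contained in B;
   this gives homogeneity, and propagation is closed under the child rules by
   construction.  The only real work is the binder rule: for n = var(l) and
   m = var(l'), domination says the paths r --t--> n and s --t--> m cross l
   and l' along suffixes p and q of t.  If p <> q, say q = e ++ p with e
   non-empty, then s --p--> y --e--> l' and (l, y) lies in Q^Downarrow, hence
   in B; as also B l l', the nodes y and l' have the same traces although l'
   is a proper descendant of y.  Pumping e then yields arbitrarily long paths
   from l', which a finite acyclic graph cannot have.  So p = q and the
   binders (l, l') are themselves reached from (r, s) along a common trace. *)

Section LambdaGraphs.
Variables (V A : Type) (lab : V -> node V A).

Notation Path := (Path lab).
Notation propagation := (propagation lab).
Notation bisimulation := (bisimulation lab).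

(* Paths compose; note that traces are written last step first. *)
Lemma path_concat u v w t1 t2 :
  Path u t1 v -> Path v t2 w -> Path u (t2 ++ t1) w.
Proof.
  intros H1 H2; induction H2; simpl; auto.
  - eapply Path_abs; eauto.
  - eapply Path_left; eauto.
  - eapply Path_right; eauto.
Qed.

Lemma path_split u t2 : forall t1 w,
  Path u (t2 ++ t1) w -> exists v, Path u t1 v /\ Path v t2 w.
Proof.
  induction t2 as [|d t2 IH]; simpl; intros t1 w H.
  - exists w; split; [exact H | constructor].
  - inversion H as [|? l ? Hp Hl|? l ? ? Hp Hl|? l ? ? Hp Hl]; subst;
      destruct (IH _ _ Hp) as (v & Hv1 & Hv2); exists v; split; auto.
    + eapply Path_abs; eauto.
    + eapply Path_left; eauto.
    + eapply Path_right; eauto.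
Qed.

(* Induction on paths treating the three kinds of edges uniformly: the last
   step of a path is a one-step path [d]. *)
Lemma Path_ind_step (n : V) (P : trace -> V -> Prop) :
  P [] n ->
  (forall tau l d m, Path n tau l -> P tau l -> Path l [d] m -> P (d :: tau) m) ->
  forall tau m, Path n tau m -> P tau m.
Proof.
  intros Hnil Hstep tau m H; induction H; auto.
  - eapply Hstep; eauto. eapply Path_abs; eauto. constructor.
  - eapply Hstep; eauto. eapply Path_left; eauto. constructor.
  - eapply Hstep; eauto. eapply Path_right; eauto. constructor.
Qed.

Lemma crosses_suffix {r m t} :
  crosses lab r t m -> exists d p, t = d ++ p /\ Path r p m.
Proof.
  induction t as [|x t IH]; simpl; intros [H|H].
  - exists [], []; auto.
  - contradiction.
  - exists [], (x :: t); auto.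
  - destruct (IH H) as (d & p & -> & Hp). exists (x :: d), p; auto.
Qed.

(* In an acyclic graph the nodes along a path are pairwise distinct; we
   record them as a duplicate-free list, one longer than the trace, of nodes
   all reaching the end of the path. *)
Lemma path_distinct_nodes (Hac : acyclic lab) u t w :
  Path u t w -> exists vs, length vs = S (length t) /\ NoDup vs /\
    forall v, In v vs -> exists t', Path v t' w.
Proof.
  revert t w; apply Path_ind_step.
  - exists [u]; repeat split.
    + repeat constructor; auto.
    + intros v [<-|[]]; exists []; constructor.
  - intros tau l d m _ (vs & Hlen & Hnd & Hreach) Hd.
    exists (m :: vs); repeat split.
    + simpl; lia.
    + constructor; auto. intros Hm.
      destruct (Hreach _ Hm) as [t' Ht'].
      discriminate (Hac _ _ (path_concat Ht' Hd)).
    + intros v [<-|Hv]; [exists []; constructor|].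
      destruct (Hreach _ Hv) as [t' Ht'].
      exists ([d] ++ t'); eapply path_concat; eauto.
Qed.

Lemma path_length_bound (Hac : acyclic lab) (nodes : list V)
  (Hnodes : forall v, In v nodes) u t w :
  Path u t w -> length t < length nodes.
Proof.
  intros H. destruct (path_distinct_nodes Hac H) as (vs & Hlen & Hnd & _).
  enough (length vs <= length nodes) by lia.
  apply NoDup_incl_length; auto. intros x _; auto.
Qed.

Definition has_trace (u : V) (t : trace) : Prop := exists w, Path u t w.

Definition same_traces (u v : V) : Prop := forall t, has_trace u t <-> has_trace v t.

(* Pumping: a node cannot have the same traces as a proper descendant, since
   then the descent could be repeated forever inside a finite acyclic graph. *)
Lemma no_trace_equivalent_descendant (Hfin : finite_nodes V) (Hac : acyclic lab)
  x z e : same_traces x z -> Path x e z -> e = [].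
Proof.
  intros Hsame Hxz. destruct Hfin as [nodes Hnodes].
  assert (Hlong : forall k, exists t, has_trace z t /\ k * length e <= length t).
  { induction k as [|k (t & [w Hw] & Hk)].
    - exists []; split; [exists z; constructor | simpl; lia].
    - exists (t ++ e); split.
      + apply Hsame. exists w. eapply path_concat; eauto.
      + rewrite length_app; simpl; lia. }
  destruct (Hlong (length nodes)) as (t & [w Hw] & Hk).
  pose proof (path_length_bound Hac nodes Hnodes Hw).
  destruct e; [reflexivity | simpl in Hk; nia].
Qed.

Lemma bisimulation_converse (B : V -> V -> Prop) :
  bisimulation B -> bisimulation (fun n m => B m n).
Proof.
  intros (Hh & (Hl & Hr & Ha) & Hc); repeat split; intros n m; intros.
  - specialize (Hh _ _ H); unfold homogeneous_nodes in *.
    destruct (lab n), (lab m); auto.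
  - eapply Hl; eauto.
  - eapply Hr; eauto.
  - eapply Ha; eauto.
  - eapply Hc; eauto.
Qed.

Lemma bisimulation_step {B : V -> V -> Prop} {u v d u'} :
  bisimulation B -> B u v -> Path u [d] u' -> exists v', Path v [d] v' /\ B u' v'.
Proof.
  intros (Hh & (Hl & Hr & Ha) & _) Huv Hstep.
  pose proof (Hh _ _ Huv) as Hk; unfold homogeneous_nodes in Hk.
  inversion Hstep as [|? l ? Hp Hlab|? l ? ? Hp Hlab|? l ? ? Hp Hlab]; subst;
    inversion Hp; subst; rewrite Hlab in Hk; destruct (lab v) eqn:Ev; try contradiction.
  - exists v0; split; [eapply Path_abs; eauto; constructor | eauto].
  - exists v0; split; [eapply Path_left; eauto; constructor | eauto].
  - exists v1; split; [eapply Path_right; eauto; constructor | eauto].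
Qed.

Lemma bisimulation_path {B : V -> V -> Prop} {u v t u'} :
  bisimulation B -> B u v -> Path u t u' -> exists v', Path v t v' /\ B u' v'.
Proof.
  intros HB Huv; revert t u'; apply Path_ind_step.
  - exists v; split; [constructor | exact Huv].
  - intros tau l d m _ (w & Hw & Blw) Hd.
    destruct (bisimulation_step HB Blw Hd) as (w' & Hw' & Bmw').
    exists w'; split; auto. apply (path_concat Hw Hw').
Qed.

Lemma bisimulation_same_traces {B : V -> V -> Prop} {u v} :
  bisimulation B -> B u v -> same_traces u v.
Proof.
  intros HB Huv t; split; intros [w Hw].
  - destruct (bisimulation_path HB Huv Hw) as (x & Hx & _); exists x; auto.
  - destruct (bisimulation_path (bisimulation_converse HB) Huv Hw) as (x & Hx & _).
    exists x; auto.
Qed.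

Lemma bisimilar_descendant_trivial (Hfin : finite_nodes V) (Hac : acyclic lab)
  {B : V -> V -> Prop} {a x z e} :
  bisimulation B -> B a x -> B a z -> Path x e z -> e = [].
Proof.
  intros HB Hax Haz Hxz. apply (no_trace_equivalent_descendant Hfin Hac (x := x) (z := z)); auto.
  intros t. rewrite <- (bisimulation_same_traces HB Hax t).
  apply (bisimulation_same_traces HB Haz t).
Qed.

Lemma propagation_paths {Q : V -> V -> Prop} {n m} :
  propagation Q n m -> exists r s t, Q r s /\ Path r t n /\ Path s t m.
Proof.
  intros H; induction H as [n m Hq| | |]; try destruct IHpropagation as (r & s & t & Hq & Hr & Hs).
  - exists n, m, []; repeat split; auto; constructor.
  - exists r, s, (DL :: t); repeat split; auto; eapply Path_left; eauto.
  - exists r, s, (DR :: t); repeat split; auto; eapply Path_right; eauto.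
  - exists r, s, (DD :: t); repeat split; auto; eapply Path_abs; eauto.
Qed.

Lemma paths_propagation {Q : V -> V -> Prop} {r s t} :
  Q r s -> forall n m, Path r t n -> Path s t m -> propagation Q n m.
Proof.
  intros Hq; induction t as [|d t IH]; intros n m Hn Hm.
  - inversion Hn; inversion Hm; subst; constructor; auto.
  - inversion Hn; subst; inversion Hm; subst.
    + eapply prop_abs; eauto.
    + eapply prop_left; eauto.
    + eapply prop_right; eauto.
Qed.

Lemma propagation_sub_bisimulation (B Q : V -> V -> Prop) :
  bisimulation B -> (forall n m, Q n m -> B n m) ->
  forall n m, propagation Q n m -> B n m.
Proof.
  intros (_ & (Hl & Hr & Ha) & _) HQB n m H; induction H; eauto.
Qed.

Lemma propagation_closed_binders (B Q : V -> V -> Prop) :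
  lambda_graph lab -> bisimulation B -> query lab Q ->
  (forall n m, Q n m -> B n m) -> closed_binders lab (propagation Q).
Proof.
  intros (_ & Hfin & Hac & Hdom) HB HQ HQB n m l l' Hnm Hn Hm.
  pose proof (propagation_sub_bisimulation HB HQB) as Hsub.
  assert (Bll : B l l') by exact (proj2 (proj2 HB) _ _ _ _ (Hsub _ _ Hnm) Hn Hm).
  destruct (propagation_paths Hnm) as (r & s & t & Hq & Hr & Hs).
  destruct (HQ _ _ Hq) as [Rr Rs].
  destruct (crosses_suffix (Hdom _ _ Hn _ _ Rr Hr)) as (d1 & p & Ht & Hp).
  destruct (crosses_suffix (Hdom _ _ Hm _ _ Rs Hs)) as (d2 & q & Ht' & Hq').
  rewrite Ht in Ht'; destruct (app_eq_app _ _ _ _ Ht') as (e & [[_ ->]|[_ ->]]).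
  - (* q = e ++ p: s reaches some y along p, and l' descends from y along e *)
    destruct (path_split _ _ Hq') as (y & Hy & Hyl').
    assert (Bly : B l y) by exact (Hsub _ _ (paths_propagation Hq Hp Hy)).
    assert (e = []) as -> by exact (bisimilar_descendant_trivial Hfin Hac HB Bly Bll Hyl').
    exact (paths_propagation Hq Hp Hq').
  - (* p = e ++ q: symmetric, using the converse of B *)
    destruct (path_split _ _ Hp) as (y & Hy & Hyl).
    assert (Byl' : B y l') by exact (Hsub _ _ (paths_propagation Hq Hy Hq')).
    assert (e = []) as ->
      by exact (bisimilar_descendant_trivial Hfin Hac (bisimulation_converse HB) Byl' Bll Hyl).
    exact (paths_propagation Hq Hp Hq').
Qed.

End LambdaGraphs.

Theorem mainTheorem9 (V A : Type) (lab : V -> node V A)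
  (HG : lambda_graph lab)
  (B Q : V -> V -> Prop)
  (HB : bisimulation lab B)
  (HQ : query lab Q)
  (HQB : forall n m, Q n m -> B n m) :
  bisimulation lab (propagation lab Q).
Proof.
  split; [|split; [split; [|split]|]].
  -
    intros n m H. exact (proj1 HB _ _ (propagation_sub_bisimulation HB HQB H)).
  - intros; eapply prop_left; eauto.
  - intros; eapply prop_right; eauto.
  - intros; eapply prop_abs; eauto.
  - exact (propagation_closed_binders HG HB HQ HQB).
Qed.
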